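(* Let $V,W$ be complex vector spaces of dimension $n+1$ and let $f:\mathbb{P}(V)\to\mathbb{P}(W)$ be a morphism given in coordinates by $y_j=f_j(x)=\sum_{|I|=m}a_{j,I}x^I$, $j=0,\dots,n$, homogeneous of degree $m$ with no common zero other than the origin. Suppose that for integer vectors $c=(c_0,\dots,c_n)$, $b=(b_0,\dots,b_n)$ and a constant $C$ one has $\langle c,I\rangle-b_j=C$ whenever $a_{j,I}\neq0$ (equivalently, $g_{b,c}(\lambda)=(\mathrm{diag}(\lambda^{c_i}),\mathrm{diag}(\lambda^{b_i}))$ stabilizes $f$ in $PGL(V)\times PGL(W)$), and let $\Pi_j=\{I\in\mathbb{R}^{n+1}:\langle c,I\rangle-b_j=C\}$. Then every vertex of $\Delta$ is contained in one of the hyperplanes $\Pi_j$.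
   Context: $x^I=x_0^{i_0}\cdots x_n^{i_n}$, $|I|=\sum i_k$, $\langle c,I\rangle=\sum c_ki_k$. $\Delta\subset\mathbb{R}^{n+1}$ is the simplex with vertices $p_i=m e_i$, $i=0,\dots,n$, where $e_i$ are the standard basis vectors. *)

From mathcomp Require Import all_boot all_order all_algebra.
From mathcomp Require Import complex Rstruct.
Set Implicit Arguments. Unset Strict Implicit. Unset Printing Implicit Defensive.
Import Order.TTheory GRing.Theory Num.Theory.
Local Open Scope ring_scope.

Definition RR : rcfType := Rdefinitions.R.
Definition CC : closedFieldType := (Rdefinitions.R)[i].

Definition mindex (n m : nat) := {ffun 'I_n.+1 -> 'I_m.+1}.

Definition mdeg (n m : nat) (I : mindex n m) : nat := (\sum_(k < n.+1) (I k : nat))%N.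

Definition monom (n m : nat) (x : 'I_n.+1 -> CC) (I : mindex n m) : CC :=
  \prod_(k < n.+1) x k ^+ (I k : nat).

Definition fcomp (n m : nat) (a : 'I_n.+1 -> mindex n m -> CC) (j : 'I_n.+1)
  (x : 'I_n.+1 -> CC) : CC :=
  \sum_(I : mindex n m | mdeg I == m) a j I * monom x I.

Definition no_common_zero (n m : nat) (a : 'I_n.+1 -> mindex n m -> CC) : Prop :=
  forall x : 'I_n.+1 -> CC, (forall j, fcomp a j x = 0) -> forall k, x k = 0.

Definition pair_int (n m : nat) (c : 'I_n.+1 -> int) (I : mindex n m) : int :=
  \sum_(k < n.+1) c k * (I k : nat)%:Z.

Definition Pi (n : nat) (c b : 'I_n.+1 -> int) (C : int) (j : 'I_n.+1)
  (p : 'I_n.+1 -> RR) : Prop :=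
  \sum_(k < n.+1) (c k)%:~R * p k - (b j)%:~R = (C%:~R : RR).

(* the vertex p_i = m e_i of the simplex Delta *)
Definition simplex_vertex (n m : nat) (i : 'I_n.+1) : 'I_n.+1 -> RR :=
  fun k => if k == i then (m%:R : RR) else 0.

From mathcomp Require Import all_boot all_order all_algebra.
From mathcomp Require Import complex Rstruct.
Set Implicit Arguments. Unset Strict Implicit. Unset Printing Implicit Defensive.
Import Order.TTheory GRing.Theory Num.Theory.
Local Open Scope ring_scope.

(* Evaluating f_j at the coordinate point e_i kills every monomial except
   x_i^m, so f_j(e_i) is the coefficient a_{j, m e_i}.  As the f_j have no
   common zero at e_i, some a_{j, m e_i} is nonzero, and the stabilizer
   condition for this monomial says exactly that the vertex m e_i lies on
   the hyperplane Pi_j. *)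

Section CoordinatePoint.

Variables (n m : nat) (i : 'I_n.+1).

Definition coord_point : 'I_n.+1 -> CC := fun k => (k == i)%:R.

Definition vertex_mindex : mindex n m :=
  [ffun k => if k == i then ord_max else ord0].

Lemma mdeg_vertex_mindex : mdeg vertex_mindex = m.
Proof.
rewrite /mdeg (bigD1 i) //= big1 => [|k ki]; first by rewrite ffunE eqxx addn0.
by rewrite ffunE (negbTE ki).
Qed.

Lemma pair_int_vertex_mindex (c : 'I_n.+1 -> int) :
  pair_int c vertex_mindex = c i * m%:Z.
Proof.
rewrite /pair_int (bigD1 i) //= big1 => [|k ki]; first by rewrite ffunE eqxx addr0.
by rewrite ffunE (negbTE ki) mulr0.
Qed.

Lemma mindex_supported_eq_vertex (I : mindex n m) :
  mdeg I = m -> (forall k, k != i -> I k = 0 :> nat) -> I = vertex_mindex.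
Proof.
move=> degI offi.
have Ii : I i = m :> nat.
  by move: degI; rewrite /mdeg (bigD1 i) //= big1 ?addn0 // => k /offi.
apply/ffunP => k; rewrite ffunE; apply: val_inj.
by case: eqP => [->|/eqP ki] //=; rewrite offi.
Qed.

Lemma monom_coord_point_vertex : monom coord_point vertex_mindex = 1.
Proof.
rewrite /monom big1 // => k _; rewrite /coord_point ffunE.
by case: eqP => _; rewrite ?expr1n ?expr0.
Qed.

Lemma monom_coord_point_eq0 (I : mindex n m) k :
  k != i -> I k != 0 :> nat -> monom coord_point I = 0.
Proof.
move=> ki Ik; rewrite /monom (bigD1 k) //= /coord_point (negbTE ki).
by rewrite expr0n (negbTE Ik) mul0r.
Qed.

Lemma fcomp_coord_point (a : 'I_n.+1 -> mindex n m -> CC) j :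
  fcomp a j coord_point = a j vertex_mindex.
Proof.
rewrite /fcomp (bigD1 vertex_mindex) ?mdeg_vertex_mindex //=.
rewrite monom_coord_point_vertex mulr1 big1 ?addr0 // => I /andP[/eqP degI neI].
case: (pickP [pred k | (k != i) && (I k != 0 :> nat)]) => [k /andP[ki Ik]|none].
  by rewrite (monom_coord_point_eq0 ki Ik) mulr0.
case/eqP: neI; apply: mindex_supported_eq_vertex => // k ki.
by apply/eqP; move: (none k); rewrite /= ki => /negbFE.
Qed.

Lemma no_common_zero_vertex_coef (a : 'I_n.+1 -> mindex n m -> CC) :
  no_common_zero a -> exists j, a j vertex_mindex != 0.
Proof.
move=> nz; case: (pickP (fun j => a j vertex_mindex != 0)) => [j aj|none].
  by exists j.
have all0 j : fcomp a j coord_point = 0.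
  by rewrite fcomp_coord_point; apply/eqP/negbFE/none.
by move: (nz _ all0 i); rewrite /coord_point eqxx => /eqP; rewrite oner_eq0.
Qed.

End CoordinatePoint.

Lemma Pi_simplex_vertexE n m (c b : 'I_n.+1 -> int) C j i :
  Pi c b C j (simplex_vertex m i) <-> c i * m%:Z - b j = C.
Proof.
rewrite /Pi /simplex_vertex (bigD1 i) //= eqxx big1 => [|k ki]; last first.
  by rewrite (negbTE ki) mulr0.
rewrite addr0 pmulrn -rmorphM -rmorphB.
by split=> [/intr_inj|->].
Qed.

Theorem mainTheorem4 (n m : nat) (a : 'I_n.+1 -> mindex n m -> CC)
  (c b : 'I_n.+1 -> int) (C : int) :
  no_common_zero a ->
  (forall (j : 'I_n.+1) (I : mindex n m),
      mdeg I = m -> a j I != 0 -> pair_int c I - b j = C) ->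
  forall i : 'I_n.+1, exists j : 'I_n.+1, Pi c b C j (simplex_vertex m i).
Proof.
move=> nz stab i.
have [j aj] := no_common_zero_vertex_coef i nz.
exists j; apply/Pi_simplex_vertexE.
by rewrite -(pair_int_vertex_mindex m i) stab ?mdeg_vertex_mindex.
Qed.
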